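(* Let $c\ge 3$ be an integer with distinct prime factors $q_1,\dots,q_\omega$. Then $$G_c \;=\; R(c)^{\varphi(c)/2}\prod_{\substack{2\le p<c,\ p \text{ prime}\\ (p,c)=1}} p^{E_c(p)}.$$
   Context: For a positive integer $n$, $R(n)$ denotes its radical, the product of the distinct primes dividing $n$ (with $R(1)=1$). $\varphi$ is Euler's totient function. For an integer $c\ge 3$, consider all pairs of positive integers $(a,b)$ with $a+b=c$, $a<b$, $\gcd(a,b)=1$; there are $\varphi(c)/2$ of them, and $G_c$ is the product of $R(abc)$ over all these pairs. For a positive integer $n$ with distinct prime factors $q_1,\dots,q_\omega$ ($\omega=0$ if $n=1$) and a real number $x\neq 0$, define $$E_n(x)=\sum_{S\subseteq\{1,\dots,\omega\}}(-1)^{|S|}\left\lfloor \frac{n}{x\prod_{i\in S}q_i}\right\rfloor,$$ i.e. $\lfloor n/x\rfloor-\sum_i\lfloor n/(xq_i)\rfloor+\sum_{i<j}\lfloor n/(xq_iq_j)\rfloor-\cdots+(-1)^\omega\lfloor n/(xq_1\cdots q_\omega)\rfloor$. *)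

From mathcomp Require Import all_boot all_order all_algebra.
Set Implicit Arguments. Unset Strict Implicit. Unset Printing Implicit Defensive.
Import Order.TTheory GRing.Theory Num.Theory.

Definition radical (n : nat) : nat := \prod_(p <- primes n) p.

Definition Gc (c : nat) : nat :=
  \prod_(1 <= a < c | (a < c - a) && coprime a (c - a)) radical (a * (c - a) * c).

(* For positive integers the
   floor of n/(x*d) is the Euclidean quotient n %/ (x*d). *)
Definition E (n x : nat) : int :=
  \sum_(S : {set 'I_(size (primes n))})
     (-1) ^+ #|S| * ((n %/ (x * \prod_(i in S) nth 0 (primes n) i))%N)%:Z.

From mathcomp Require Import all_boot all_order all_algebra zify.
Import GRing.Theory.

Set Implicit Arguments.
Unset Strict Implicit.
Unset Printing Implicit Defensive.

(* Since a, c - a and c are pairwise coprime, R(a (c - a) c) = R(a) R(c - a) R(c).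
   Pairing a with c - a, the factors R(a) R(c - a) of the phi(c)/2 pairs give the
   product of R(a) over all 0 < a < c coprime to c, and R(c) occurs once per pair.
   A prime p contributes one factor to that product for each multiple a = p k < c
   coprime to c: there are none if p divides c, and otherwise k ranges over the
   integers k <= c/p coprime to c, whose number is E_c(p) by inclusion-exclusion
   over the prime divisors of c. *)

Lemma radical_bound n B : 0 < n -> n < B ->
  radical n = \prod_(0 <= p < B | prime p && (p %| n)) p.
Proof.
move=> n_gt0 ltnB; rewrite /radical -[RHS]big_filter; apply: perm_big.
apply: uniq_perm => [||p]; first exact: primes_uniq.
  exact/filter_uniq/iota_uniq.
rewrite mem_primes mem_filter mem_index_iota n_gt0 /=.
case: (prime p) => //=; case p_dvd: (p %| n) => //=.
by rewrite (leq_ltn_trans (dvdn_leq n_gt0 p_dvd) ltnB).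
Qed.

Lemma radicalM m n : 0 < m -> 0 < n -> coprime m n ->
  radical (m * n) = radical m * radical n.
Proof.
move=> m_gt0 n_gt0 co_mn; rewrite /radical -big_cat; apply: perm_big.
apply: uniq_perm => [||p]; first exact: primes_uniq.
  by rewrite cat_uniq !primes_uniq andbT -coprime_has_primes.
by rewrite mem_cat primesM.
Qed.

Lemma big_nat_dvd (R : Type) (idx : R) (op : Monoid.law idx) d m (F : nat -> R) :
  0 < d ->
  \big[op/idx]_(1 <= a < m.+1 | d %| a) F a =
  \big[op/idx]_(1 <= k < (m %/ d).+1) F (d * k).
Proof.
move=> d_gt0; elim: m => [|m IHm]; first by rewrite div0n !big_geq.
rewrite big_mkcond big_nat_recr //= -big_mkcond IHm.
case: ifP => [d_dvd | d_ndvd]; last by rewrite divnS // d_ndvd Monoid.mulm1.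
have q_gt0 : 0 < m.+1 %/ d by rewrite divn_gt0 // dvdn_leq.
by rewrite [RHS]big_nat_recr //= mulnC divnK // divnS // d_dvd.
Qed.

Lemma sum_dvdn_nat d m : 0 < d -> \sum_(1 <= k < m.+1) (d %| k) = m %/ d.
Proof.
move=> d_gt0; rewrite (eq_bigr (fun k => if d %| k then 1 else 0)) => [|k _]; last first.
  by case: dvdn.
by rewrite -big_mkcond big_nat_dvd // sum_nat_const_nat subn1 muln1.
Qed.

Lemma coprime_subnr a c : a <= c -> coprime a (c - a) = coprime a c.
Proof. by move=> le_ac; rewrite /coprime -{2}(subnKC le_ac) gcdnDl. Qed.

Lemma coprime_subnl a c : a <= c -> coprime (c - a) c = coprime a c.
Proof.
move=> le_ac; rewrite /coprime -{2}(subnK le_ac) gcdnDl gcdnC.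
exact: coprime_subnr.
Qed.

Lemma coprime_neq_subn a c : 2 < c -> coprime a c -> a != c - a.
Proof.
move=> c_gt2 co_ac; apply/eqP => def_a.
have def_c : c = a * 2 by lia.
by move: co_ac; rewrite def_c coprimeMr /coprime gcdnn => /andP[/eqP a1 _]; lia.
Qed.

Lemma big_coprime_pairs (R : Type) (idx : R) (op : Monoid.com_law idx) c
    (F : nat -> R) : 2 < c ->
  \big[op/idx]_(1 <= a < c | (a < c - a) && coprime a (c - a)) op (F a) (F (c - a))
  = \big[op/idx]_(1 <= a < c | coprime a c) F a.
Proof.
move=> c_gt2; rewrite big_split [RHS](bigID (fun a => a < c - a)) /=.
congr (op _ _).
  apply: congr_big_nat => // a /andP[_ lt_ac].
  by rewrite andbC coprime_subnr // ltnW.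
rewrite big_nat_rev; apply: congr_big_nat => // a => [|/andP[_]] /andP[_ lt_ac];
  rewrite add1n subSS subKn ?(ltnW lt_ac) //.
rewrite coprime_sym coprime_subnr ?(ltnW lt_ac) // andbC.
case: (boolP (coprime a c)) => //= co_ac.
by rewrite -leqNgt ltn_neqAle eq_sym coprime_neq_subn.
Qed.

Lemma totient_sum_coprime n : 1 < n -> totient n = \sum_(1 <= a < n | coprime a n) 1.
Proof.
move=> n_gt1; rewrite totient_count_coprime big_ltn 1?ltnW //.
have -> : coprime n 0 = false by rewrite /coprime gcdn0 gtn_eqF.
rewrite add0n [RHS]big_mkcond; apply: eq_bigr => a _.
by rewrite coprime_sym; case: coprime.
Qed.

Lemma card_coprime_pairs c : 2 < c ->
  \sum_(1 <= a < c | (a < c - a) && coprime a (c - a)) 1 = totient c %/ 2.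
Proof.
move=> c_gt2; rewrite totient_sum_coprime 1?ltnW //.
by rewrite -(big_coprime_pairs addn (fun=> 1) c_gt2) big_split /= addnn -muln2 mulnK.
Qed.

Lemma Gc_coprime_radicals c : 2 < c ->
  Gc c = radical c ^ (totient c %/ 2) * \prod_(1 <= a < c | coprime a c) radical a.
Proof.
move=> c_gt2; rewrite -(big_coprime_pairs muln radical c_gt2) -card_coprime_pairs //.
rewrite /Gc sum1_count -iter_muln_1 -big_const_seq -big_split /=.
apply: congr_big_nat => // a /andP[/andP[_ co_a_ca] /andP[a_gt0 lt_ac]].
have ca_gt0 : 0 < c - a by rewrite subn_gt0.
have co_ac : coprime a c by rewrite -coprime_subnr // ltnW.
have co_cac : coprime (c - a) c by rewrite coprime_subnl // ltnW.
have co_prod : coprime (a * (c - a)) c by rewrite coprimeMl co_ac.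
rewrite radicalM ?muln_gt0 ?a_gt0 //; last exact: leq_trans c_gt2.
by rewrite radicalM // mulnC.
Qed.

Definition coprime_count n m := \sum_(1 <= k < m.+1) coprime k n.

Lemma sum_coprime_multiples p c : 0 < p -> 1 < c -> coprime p c ->
  \sum_(1 <= a < c | p %| a) coprime a c = coprime_count c (c %/ p).
Proof.
move=> p_gt0 c_gt1 co_pc.
rewrite /coprime_count [RHS](eq_bigr (fun k => coprime (p * k) c : nat)) => [|k _]; last first.
  by rewrite coprimeMl co_pc.
rewrite -(big_nat_dvd _ c (fun a => coprime a c : nat) p_gt0) [RHS]big_mkcond.
rewrite big_nat_recr 1?ltnW //= -big_mkcond.
by rewrite /coprime gcdnn gtn_eqF // if_same addn0.
Qed.

Lemma prod_pow_dvdn_coprime p c : prime p -> 1 < c ->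
  \prod_(1 <= a < c | coprime a c) p ^ (p %| a) =
  if coprime p c then p ^ coprime_count c (c %/ p) else 1.
Proof.
move=> prime_p c_gt1; rewrite -(big_morph (expn p) (expnD p) (expn0 p)).
case: ifP => co_pc; last first.
  rewrite big1 // => a co_ac; case: (boolP (p %| a)) => // /coprime_dvdl/(_ co_ac).
  by rewrite co_pc.
rewrite -sum_coprime_multiples ?prime_gt0 //; congr (p ^ _).
rewrite big_mkcond [RHS]big_mkcond; apply: eq_bigr => a _.
by case: coprime; case: dvdn.
Qed.

Lemma prod_radical_coprime c : 1 < c ->
  \prod_(1 <= a < c | coprime a c) radical a =
  \prod_(2 <= p < c | prime p && coprime p c) p ^ coprime_count c (c %/ p).
Proof.
move=> c_gt1.
transitivity (\prod_(1 <= a < c | coprime a c) \prod_(0 <= p < c | prime p) p ^ (p %| a)).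
  apply: congr_big_nat => // a /andP[_ /andP[a_gt0 lt_ac]].
  rewrite (radical_bound a_gt0 lt_ac) big_mkcondr; apply: eq_bigr => p _.
  by case: dvdn.
rewrite exchange_big_nat /= [RHS](big_nat_widenl _ 0) // [LHS]big_mkcond [RHS]big_mkcond.
apply: eq_bigr => p _; case: (boolP (prime p)) => //= prime_p.
by rewrite prod_pow_dvdn_coprime // prime_gt1 // andbT.
Qed.

Lemma dvdn_prod_primes (r : seq nat) k : uniq r -> all prime r ->
  (\prod_(p <- r) p %| k) = all (dvdn^~ k) r.
Proof.
elim: r => [|p r IHr] /=; first by rewrite big_nil dvd1n.
case/andP=> p_notin_r uniq_r /andP[prime_p prime_r].
rewrite big_cons Gauss_dvd ?IHr // prime_coprime // Euclid_dvd_prod // big_has.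
apply/hasPn => q q_in_r /=; rewrite dvdn_prime2 ?(allP prime_r q q_in_r) //.
by apply: contraNneq p_notin_r => ->.
Qed.

Lemma prodr_natb (R : pzSemiRingType) (I : Type) (r : seq I) (b : pred I) :
  (\prod_(i <- r) (b i)%:R = (all b r)%:R :> R)%R.
Proof.
elim: r => [|i r IHr]; first by rewrite big_nil.
by rewrite big_cons IHr -natrM mulnb.
Qed.

Section InclusionExclusion.
Local Open Scope ring_scope.

Variables (R : comPzRingType) (q : seq nat) (k : nat).
Hypotheses (uniq_q : uniq q) (prime_q : all prime q).

Lemma dvdn_prod_nth_primes (S : {set 'I_(size q)}) :
  (\prod_(i in S) nth 0 q i %| k)%N%:R = \prod_(i in S) (nth 0 q i %| k)%N%:R :> R.
Proof.
rewrite -big_enum -(big_map _ xpredT id) -big_enum -(big_map _ xpredT (fun p => (p %| k)%N%:R)).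
rewrite prodr_natb dvdn_prod_primes //.
  rewrite map_inj_in_uniq ?enum_uniq // => i j _ _ /eqP.
  by rewrite nth_uniq // => /eqP/val_inj.
by apply/allP => _ /mapP[i _ ->]; apply: (allP prime_q); rewrite mem_nth.
Qed.

Lemma sum_subsets_dvdn_prod :
  \sum_(S : {set 'I_(size q)}) (-1) ^+ #|S| * (\prod_(i in S) nth 0 q i %| k)%N%:R
  = (all (fun p => ~~ (p %| k)%N) q)%:R :> R.
Proof.
under eq_bigr => S _ do rewrite dvdn_prod_nth_primes -prodrN big_mkcond /=.
rewrite -(bigA_distr 1 +%R) -prodr_natb [RHS](big_nth 0%N) [RHS]big_mkord.
by apply: eq_bigr => i _; case: dvdn; rewrite /= ?mulr1n ?mulr0n ?oppr0 ?addNr ?add0r.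
Qed.

End InclusionExclusion.

Lemma coprime_all_primes k n : 0 < k -> 0 < n ->
  coprime k n = all (fun p => ~~ (p %| k)) (primes n).
Proof.
move=> k_gt0 n_gt0; rewrite coprime_has_primes // -all_predC; apply: eq_in_all => p.
by rewrite mem_primes /= mem_primes k_gt0 => /and3P[-> _ _].
Qed.

Lemma E_coprime_count n x : 0 < n -> 0 < x -> E n x = coprime_count n (n %/ x).
Proof.
move=> n_gt0 x_gt0; rewrite /E /coprime_count -natz natr_sum.
have prime_primes : all prime (primes n) by apply/allP => p /[!mem_primes] /andP[].
have prod_gt0 (S : {set 'I_(size (primes n))}) : 0 < \prod_(i in S) nth 0 (primes n) i.
  by apply: prodn_gt0 => i; apply/prime_gt0/(allP prime_primes)/mem_nth.
under [LHS]eq_bigr => S _ do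
  rewrite divnMA -(sum_dvdn_nat _ (prod_gt0 S)) -natz natr_sum mulr_sumr.
rewrite exchange_big; apply: eq_big_nat => k /andP[k_gt0 _] /=.
by rewrite coprime_all_primes // sum_subsets_dvdn_prod // primes_uniq.
Qed.

Local Open Scope ring_scope.

Theorem theorem1 (c : nat) (hc : (3 <= c)%N) :
  (Gc c)%:Q =
    ((radical c) ^ (totient c %/ 2))%N%:Q *
    \prod_(2 <= p < c | prime p && coprime p c) (p%:Q) ^ (E c p).
Proof.
have c_gt0 : (0 < c)%N by apply: leq_trans hc.
rewrite Gc_coprime_radicals // prod_radical_coprime 1?ltnW // PoszM intrM prodMz.
congr (_ * _); apply: eq_bigr => p /andP[prime_p _].
rewrite (E_coprime_count c_gt0 (prime_gt0 prime_p)) -exprnP; exact: natrX.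
Qed.
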